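(* Every element of $\widehat{\Pi}_{3/3,3}$ can be written as \[ \psi_a(z)=\frac{\frac16\left(-6a^3+18a^2-9a+1\right)z^3+\frac12\left(6a^2-6a+1\right)z^2+(1-3a)z+1}{(1-az)^3},\qquad a\in\mathbb{R}. \] Then $\widehat{R}_{3/3,3}=2+\sqrt8$. This value is attained for $a=\frac{2-\sqrt2}{4}$, and $R(\psi_a)<2+\sqrt8$ for every other $a\in\mathbb{R}$.
   Context: A real rational function $\psi$ is always considered in lowest terms, as a smooth function on $\mathbb{R}$ minus its finitely many poles. It is absolutely monotonic at $x\in\mathbb{R}$ if $x$ is not a pole and $\psi^{(k)}(x)\ge 0$ for all integers $k\ge 0$. The radius of absolute monotonicity is $R(\psi)=\sup\big(\{r\in[0,\infty): \psi \text{ is absolutely monotonic at each point of } [-r,0]\}\cup\{0\}\big)\in[0,+\infty]$. $\widehat{\Pi}_{s/s,p}$ denotes the set of real rational functions $\psi(z)=P(z)/(1-az)^s$ with $P$ a real polynomial of degree at most $s$ and $a\in\mathbb{R}$, such that $\psi(z)-e^z=O(z^{p+1})$ as $z\to0$. Finally, $\widehat{R}_{s/s,p}=\sup\{R(\psi):\psi\in\widehat{\Pi}_{s/s,p}\}$. *)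

From Stdlib Require Import Reals Lra List.
Open Scope R_scope.

(* Real polynomials as coefficient lists [c0; c1; ...] (lowest degree first),
   evaluated by Horner's scheme. *)
Fixpoint peval (l : list R) (x : R) : R :=
  match l with
  | nil => 0
  | c :: l' => c + x * peval l' x
  end.

Definition abs_mono_fun (g : R -> R) (x : R) : Prop :=
  exists delta : R, 0 < delta /\
  exists f : nat -> R -> R,
    (forall y, Rabs (y - x) < delta -> f O y = g y) /\
    (forall k y, Rabs (y - x) < delta -> derivable_pt_lim (f k) y (f (S k) y)) /\
    (forall k, 0 <= f k x).

(* The real rational function N/D (N, D polynomial functions, D not the zero
   polynomial), taken in lowest terms.  A point x is not a pole iff N/D admits
   a representation p1/q1 (p1*D = N*q1 as polynomials) with q1(x) <> 0; near
   such x the rational function coincides with p1/q1. *)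
Definition rat_abs_mono (N D : R -> R) (x : R) : Prop :=
  exists p1 q1 : list R,
    (forall y, peval p1 y * D y = N y * peval q1 y) /\
    peval q1 x <> 0 /\
    abs_mono_fun (fun y => peval p1 y / peval q1 y) x.

(* The set {r in [0,oo) : N/D abs. monotonic at each point of [-r,0]} U {0};
   the radius of absolute monotonicity R(N/D) is its supremum in [0,+oo]. *)
Definition AM_radius_set (N D : R -> R) (r : R) : Prop :=
  (0 <= r /\ forall x, - r <= x <= 0 -> rat_abs_mono N D x) \/ r = 0.

Definition den (s : nat) (a : R) (z : R) : R := (1 - a * z) ^ s.

(* (P, a) describes an element P(z)/(1-az)^s of \hat\Pi_{s/s,p}:
   deg P <= s and psi(z) - e^z = O(z^(p+1)) as z -> 0. *)
Definition PiHat (s p : nat) (P : list R) (a : R) : Prop :=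
  (length P <= S s)%nat /\
  exists C delta : R, 0 < delta /\
    forall z, Rabs z < delta ->
      Rabs (peval P z / den s a z - exp z) <= C * Rabs z ^ (S p).

Definition psi_num (a : R) : list R :=
  1 :: (1 - 3 * a) ::  ((6 * a ^ 2 - 6 * a + 1) / 2) ::
   ((- 6 * a ^ 3 + 18 * a ^ 2 - 9 * a + 1) / 6) :: nil.

(* Proof outline.
   1. Uniqueness.  psi_a is an order-3 approximant of exp with denominator
      (1 - a z)^3 (Taylor bound for exp plus an explicit remainder).  Any other
      numerator P with the same denominator differs from psi_a by a cubic that
      is O(z^4) near 0, hence vanishes: every element of the class is psi_a.
   2. Derivatives.  For a <> 0, partial fractions in w = 1 - a y give a closed
      form for every derivative of psi_a; for m >= 1 the m-th derivative is a
      positive multiple (when a > 0, w > 0) of a quadratic Q_a(w, m).  Using a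
      general transfer lemma for towers of derivatives, psi_a is absolutely
      monotonic at x (with 1 - a x > 0) iff all these derivatives are >= 0.
   3. At a_star = (2 - sqrt 2)/4, Q_a(w, m) is a sum of nonnegative terms for
      x in [-(2 + 2 sqrt 2), 0] and the second derivative turns negative just
      beyond, so R(psi_{a_star}) = 2 + sqrt 8.
   4. For every other a some derivative is negative at some point of
      (-(2 + sqrt 8), 0] (six explicit regimes of a), so R(psi_a) < 2 + sqrt 8.
   The main theorem combines these facts with two general lemmas on radii. *)

From Stdlib Require Import Reals Lra Lia List Classical FunctionalExtensionality.
From Coquelicot Require Import Coquelicot.
Open Scope R_scope.

(** * Uniqueness of the approximant *)

Definition psi_cubic (a y : R) : R :=
  1 + (1 - 3*a)*y + (6*a^2 - 6*a + 1)/2 * y^2 + (-6*a^3 + 18*a^2 - 9*a + 1)/6 * y^3.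

Lemma peval_psi_num a y : peval (psi_num a) y = psi_cubic a y.
Proof. unfold psi_cubic; simpl; field. Qed.

Lemma mvt_power_step (f f' : R -> R) M k : 0 <= M -> f 0 = 0 ->
  (forall c, Rabs c <= 1 -> derivable_pt_lim f c (f' c)) ->
  (forall c, Rabs c <= 1 -> Rabs (f' c) <= M * Rabs c ^ k) ->
  forall z, Rabs z <= 1 -> Rabs (f z) <= M * Rabs z ^ (S k).
Proof.
  intros HM H0 Hd Hb z Hz.
  destruct (MVT_abs f f' 0 z) as [c [Hc Hcb]].
  - intros c Hc. apply Hd.
    unfold Rmin, Rmax in Hc. destruct (Rle_dec 0 z); apply Rabs_le; apply Rabs_le_between in Hz; lra.
  - assert (Hcz : Rabs c <= Rabs z).
    { unfold Rmin, Rmax in Hcb. destruct (Rle_dec 0 z).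
      - rewrite !Rabs_right; lra.
      - rewrite !Rabs_left1; lra. }
    rewrite H0, !Rminus_0_r in Hc. rewrite Hc.
    simpl. rewrite (Rmult_comm (Rabs z)), <- Rmult_assoc.
    apply Rmult_le_compat_r; [apply Rabs_pos|].
    eapply Rle_trans; [apply Hb; lra|].
    apply Rmult_le_compat_l; auto. apply pow_incr. split; [apply Rabs_pos| auto].
Qed.

(** Third-order Taylor bound for the exponential on [[-1,1]] (using [e <= 3]),
    obtained by four applications of [mvt_power_step]. *)
Lemma exp_taylor3 z : Rabs z <= 1 ->
  Rabs (exp z - (1 + z + z^2/2 + z^3/6)) <= 3 * Rabs z ^ 4.
Proof.
  assert (H0 : forall c, Rabs c <= 1 -> Rabs (exp c) <= 3 * Rabs c ^ 0).
  { intros c Hc. simpl. rewrite Rabs_right by (left; apply exp_pos).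
    apply Rle_trans with (exp 1); [|rewrite Rmult_1_r; apply exp_le_3].
    apply Rabs_le_between in Hc. destruct (Req_dec c 1) as [->|Hc1]; [lra|].
    left; apply exp_increasing; lra. }
  assert (H1 := mvt_power_step (fun z => exp z - 1) exp 3 0 ltac:(lra)
     ltac:(cbv beta; rewrite exp_0; ring)
     ltac:(intros c _; apply is_derive_Reals; auto_derive; [exact I| ring]) H0).
  assert (H2 := mvt_power_step (fun z => exp z - 1 - z) (fun z => exp z - 1) 3 1 ltac:(lra)
     ltac:(cbv beta; rewrite exp_0; ring)
     ltac:(intros c _; apply is_derive_Reals; auto_derive; [exact I| ring]) H1).
  assert (H3 := mvt_power_step (fun z => exp z - 1 - z - z^2/2) (fun z => exp z - 1 - z) 3 2
     ltac:(lra) ltac:(cbv beta; rewrite exp_0; simpl; field)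
     ltac:(intros c _; apply is_derive_Reals; auto_derive; [exact I| simpl; field]) H2).
  assert (H4 := mvt_power_step (fun z => exp z - 1 - z - z^2/2 - z^3/6)
     (fun z => exp z - 1 - z - z^2/2) 3 3
     ltac:(lra) ltac:(cbv beta; rewrite exp_0; simpl; field)
     ltac:(intros c _; apply is_derive_Reals; auto_derive; [exact I| simpl; field]) H3).
  intro Hz. replace (exp z - (1 + z + z^2/2 + z^3/6)) with (exp z - 1 - z - z^2/2 - z^3/6)
    by ring.
  exact (H4 z Hz).
Qed.

Fixpoint coef_abs_sum (l : list R) : R :=
  match l with
  | nil => 0
  | c :: l' => Rabs c + coef_abs_sum l'
  end.

Lemma peval_abs_le l z : Rabs z <= 1 -> Rabs (peval l z) <= coef_abs_sum l.
Proof.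
  intros Hz; induction l as [|c l IH]; simpl.
  - rewrite Rabs_R0; lra.
  - eapply Rle_trans; [apply Rabs_triang|]. rewrite Rabs_mult.
    pose proof (Rabs_pos z); pose proof (Rabs_pos (peval l z)). nra.
Qed.

(** Near [0] the denominator [1 - a z] stays in [[1/2, 3/2]]: this holds for
    [|z| <= rho a]. *)
Definition rho (a : R) : R := 1 / (2 * (Rabs a + 1)).

Lemma rho_pos a : 0 < rho a.
Proof. unfold rho. pose proof (Rabs_pos a). apply Rdiv_lt_0_compat; lra. Qed.

Lemma rho_le_half a : rho a <= 1/2.
Proof.
  unfold rho. pose proof (Rabs_pos a).
  apply (Rmult_le_reg_r (2 * (Rabs a + 1))); [lra|]. field_simplify; lra.
Qed.

Lemma den_near_one a z : Rabs z <= rho a -> 1/2 <= 1 - a*z <= 3/2.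
Proof.
  intro Hz. pose proof (Rabs_pos a). pose proof (Rabs_pos z).
  assert (Haz : Rabs (a*z) <= 1/2).
  { rewrite Rabs_mult. apply Rle_trans with (Rabs a * rho a); [nra|].
    unfold rho. apply (Rmult_le_reg_r (2 * (Rabs a + 1))); [lra|]. field_simplify; lra. }
  apply Rabs_le_between in Haz. lra.
Qed.

(** The remainder of [psi_a] beyond its Taylor cubic:
    [psi_a(z) - exp z = -(exp z - T_3(z)) - z^4 rem_a(z) / (1 - a z)^3]. *)
Definition psi_remainder (a : R) : list R :=
  (-a/2 + 3*a^2/2 - a^3) :: (a^2/2 - a^3/2) :: (-a^3/6) :: nil.

Lemma psi_cubic_expansion a z : 1 - a*z <> 0 ->
  psi_cubic a z / (1 - a*z)^3 - exp z
  = - (exp z - (1 + z + z^2/2 + z^3/6)) - z^4 * peval (psi_remainder a) z / (1 - a*z)^3.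
Proof. intro Hw. unfold psi_cubic; simpl. field. exact Hw. Qed.

Definition psi_error_const (a : R) : R := 8 * coef_abs_sum (psi_remainder a) + 3.

Lemma psi_exp_error a z : Rabs z <= rho a ->
  Rabs (psi_cubic a z / (1 - a*z)^3 - exp z) <= psi_error_const a * Rabs z ^ 4.
Proof.
  intros Hz. destruct (den_near_one a z Hz) as [Hw1 Hw2].
  assert (Hz1 : Rabs z <= 1) by (pose proof (rho_le_half a); lra).
  rewrite psi_cubic_expansion by lra.
  assert (Htaylor := exp_taylor3 z Hz1).
  assert (Hrem := peval_abs_le (psi_remainder a) z Hz1).
  assert (Hinv : 0 < / (1 - a*z)^3 <= 8).
  { assert (1/8 <= (1 - a*z)^3) by (replace (1/8) with ((1/2)^3) by field; apply pow_incr; lra).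
    split; [apply Rinv_0_lt_compat; lra|].
    replace 8 with (/ (1/8)) by field. apply Rinv_le_contravar; lra. }
  assert (Hz4 : 0 <= Rabs z ^ 4) by (apply pow_le, Rabs_pos).
  assert (Hquot : Rabs (z^4 * peval (psi_remainder a) z / (1 - a*z)^3)
                  <= Rabs z ^ 4 * (coef_abs_sum (psi_remainder a) * 8)).
  { unfold Rdiv. rewrite !Rabs_mult, <- RPow_abs, (Rabs_right (/ _)) by lra.
    rewrite Rmult_assoc. apply Rmult_le_compat_l; [exact Hz4|].
    apply Rmult_le_compat; [apply Rabs_pos| lra| exact Hrem| lra]. }
  unfold psi_error_const.
  eapply Rle_trans; [apply Rabs_triang|]. rewrite !Rabs_Ropp. nra.
Qed.

Lemma psi_in_PiHat a : PiHat 3 3 (psi_num a) a.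
Proof.
  split; [simpl; lia|].
  exists (psi_error_const a), (rho a). split; [apply rho_pos|].
  intros z Hz. rewrite peval_psi_num. unfold den. apply psi_exp_error. lra.
Qed.

Lemma le_linear_zero d M del : 0 < del ->
  (forall z, 0 < z < del -> Rabs d <= M * z) -> d = 0.
Proof.
  intros Hd H. destruct (Req_dec d 0) as [|Hne]; auto. exfalso.
  assert (Hp : 0 < Rabs d) by (apply Rabs_pos_lt; auto).
  destruct (Rle_or_lt M 0) as [HM|HM].
  - specialize (H (del/2) ltac:(lra)). nra.
  - set (z := Rmin (del/2) (Rabs d / (2*M))).
    assert (Hz1 : z <= del/2) by apply Rmin_l.
    assert (Hz2 : z <= Rabs d / (2*M)) by apply Rmin_r.
    assert (Hz0 : 0 < z) by (apply Rmin_pos; [lra| apply Rdiv_lt_0_compat; lra]).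
    specialize (H z ltac:(lra)).
    assert (M * z <= M * (Rabs d / (2*M))) by (apply Rmult_le_compat_l; lra).
    replace (M * (Rabs d / (2*M))) with (Rabs d / 2) in * by (field; lra). lra.
Qed.

(** A polynomial with [n] coefficients that is [O(z^n)] as [z -> 0+] vanishes
    identically: peel off the constant term and divide by [z]. *)
Lemma peval_small_vanishes l : forall K del, 0 < del ->
  (forall z, 0 < z < del -> Rabs (peval l z) <= K * z ^ length l) ->
  forall y, peval l y = 0.
Proof.
  induction l as [|c l IH]; intros K del Hdel Hsmall y; [reflexivity|].
  set (e := Rmin del 1).
  assert (He : 0 < e) by (apply Rmin_pos; lra).
  assert (He1 : e <= del) by apply Rmin_l.
  assert (He2 : e <= 1) by apply Rmin_r.
  assert (Hc : c = 0).
  { apply (le_linear_zero c (Rabs K + coef_abs_sum l) e He). intros z Hz.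
    specialize (Hsmall z ltac:(lra)). simpl in Hsmall.
    assert (Hl : Rabs (peval l z) <= coef_abs_sum l)
      by (apply peval_abs_le; rewrite Rabs_right; lra).
    assert (Hzn : 0 <= z ^ length l <= 1)
      by (split; [apply pow_le; lra| rewrite <- (pow1 (length l)); apply pow_incr; lra]).
    assert (HK : K * (z * z ^ length l) <= Rabs K * z).
    { apply Rle_trans with (Rabs K * (z * z ^ length l)).
      - apply Rmult_le_compat_r; [nra| apply Rle_abs].
      - apply Rmult_le_compat_l; [apply Rabs_pos| nra]. }
    replace c with ((c + z * peval l z) - z * peval l z) by ring.
    eapply Rle_trans; [apply Rabs_triang|].
    rewrite Rabs_Ropp, Rabs_mult, (Rabs_right z) by lra. nra. }
  subst c. simpl. rewrite (IH K e He); [ring|]. intros z Hz.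
  specialize (Hsmall z ltac:(lra)). simpl in Hsmall.
  rewrite Rplus_0_l, Rabs_mult, (Rabs_right z) in Hsmall by lra.
  apply (Rmult_le_reg_l z); lra.
Qed.

Lemma numerators_close N1 N2 w W E C1 C2 t : 0 < w <= W -> 0 <= t ->
  Rabs (N1 / w - E) <= C1 * t -> Rabs (N2 / w - E) <= C2 * t ->
  Rabs (N1 - N2) <= W * (Rabs C1 + Rabs C2) * t.
Proof.
  intros Hw Ht H1 H2.
  replace (N1 - N2) with (w * ((N1/w - E) + - (N2/w - E))) by (field; lra).
  rewrite Rabs_mult, (Rabs_right w) by lra.
  assert (Rabs ((N1/w - E) + - (N2/w - E)) <= (Rabs C1 + Rabs C2) * t).
  { eapply Rle_trans; [apply Rabs_triang|]. rewrite Rabs_Ropp.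
    pose proof (Rle_abs C1); pose proof (Rle_abs C2). nra. }
  rewrite Rmult_assoc. apply Rmult_le_compat; try lra. apply Rabs_pos.
Qed.

Lemma cubic_coefficients (P : list R) : (length P <= 4)%nat ->
  exists p0 p1 p2 p3, forall y, peval P y = p0 + p1*y + p2*y^2 + p3*y^3.
Proof.
  intro H.
  destruct P as [|p0 [|p1 [|p2 [|p3 [|p4 l]]]]];
    [ exists 0, 0, 0, 0 | exists p0, 0, 0, 0 | exists p0, p1, 0, 0
    | exists p0, p1, p2, 0 | exists p0, p1, p2, p3 | simpl in H; lia ];
    intro; simpl; ring.
Qed.

(** Every element of [\hat\Pi_{3/3,3}] with parameter [a] has numerator
    [psi_cubic a]: the difference of two order-3 approximants of [exp] with
    the same denominator is a cubic that is [O(z^4)], hence zero. *)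
Lemma PiHat_numerator P a : PiHat 3 3 P a -> forall y, peval P y = psi_cubic a y.
Proof.
  intros [Hlen [C [d [Hd HP]]]] y.
  destruct (psi_in_PiHat a) as [_ [C' [d' [Hd' Hpsi]]]].
  destruct (cubic_coefficients P Hlen) as [p0 [p1 [p2 [p3 Hp]]]].
  set (diff := (p0 - 1) :: (p1 - (1 - 3*a)) :: (p2 - (6*a^2 - 6*a + 1)/2)
               :: (p3 - (-6*a^3 + 18*a^2 - 9*a + 1)/6) :: nil).
  assert (Hdiff : forall z, peval diff z = peval P z - psi_cubic a z)
    by (intro z; rewrite Hp; unfold diff, psi_cubic; simpl; ring).
  set (del := Rmin (Rmin d d') (rho a)).
  assert (Hdel : 0 < del) by (repeat apply Rmin_pos; auto; apply rho_pos).
  assert (Hsmall : forall z, 0 < z < del ->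
            Rabs (peval diff z) <= (3/2)^3 * (Rabs C + Rabs C') * z ^ length diff).
  { intros z Hz.
    assert (Hzd : z < d /\ z < d' /\ z <= rho a).
    { unfold del in Hz. pose proof (Rmin_l (Rmin d d') (rho a)).
      pose proof (Rmin_r (Rmin d d') (rho a)). pose proof (Rmin_l d d').
      pose proof (Rmin_r d d'). lra. }
    rewrite <- (Rabs_right z) in Hzd by lra.
    destruct (den_near_one a z ltac:(lra)) as [Hw1 Hw2].
    specialize (HP z ltac:(lra)). specialize (Hpsi z ltac:(lra)).
    unfold den in HP, Hpsi. rewrite peval_psi_num in Hpsi.
    rewrite (Rabs_right z) in HP, Hpsi by lra.
    rewrite Hdiff. apply (numerators_close _ _ ((1 - a*z)^3) _ (exp z)); auto.
    - split; [apply pow_lt; lra| apply pow_incr; lra].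
    - apply pow_le; lra. }
  pose proof (peval_small_vanishes diff _ _ Hdel Hsmall y) as Hzero.
  rewrite Hdiff in Hzero. lra.
Qed.

(** * Successive derivatives of [psi_a] *)

Lemma is_derive_Rplus (f h : R -> R) y df dh :
  is_derive f y df -> is_derive h y dh -> is_derive (fun t => f t + h t) y (df + dh).
Proof. exact (is_derive_plus f h y df dh). Qed.

(** For [a <> 0], partial fractions give
    [psi_a(y) = pf0 + pf1/w + pf2/w^2 + pf3/w^3] with [w = 1 - a y], so the
    [k]-th derivative [psi_deriv a k] has the closed form below. *)
Section PartialFractions.

Variable a : R.

Definition pf0 : R := (6*a^3 - 18*a^2 + 9*a - 1)/(6*a^3).
Definition pf1 : R := (12*a^2 - 8*a + 1)/(2*a^3).
Definition pf2 : R := -(8*a^2 - 7*a + 1)/(2*a^3).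
Definition pf3 : R := (6*a^2 - 6*a + 1)/(6*a^3).

Definition psi_deriv (k : nat) (y : R) : R :=
  (match k with O => pf0 | S _ => 0 end)
  + pf1 * a^k * INR (Factorial.fact k) / (1 - a*y)^(S k)
  + pf2 * a^k * INR (Factorial.fact (S k)) / (1 - a*y)^(S (S k))
  + pf3 * a^k * INR (Factorial.fact (S (S k))) / 2 / (1 - a*y)^(S (S (S k))).

Lemma inv_power_derive c n y : 1 - a*y <> 0 ->
  is_derive (fun y => c / (1 - a*y)^(S n)) y (c * INR (S n) * a / (1 - a*y)^(S (S n))).
Proof.
  intro Hw. assert ((1 - a*y)^n <> 0) by (apply pow_nonzero; exact Hw).
  auto_derive.
  - replace (1 + - (a*y)) with (1 - a*y) by ring.
    apply Rmult_integral_contrapositive; auto.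
  - replace (1 + - (a*y)) with (1 - a*y) by ring. simpl. field. auto.
Qed.

Lemma psi_deriv_0 y : a <> 0 -> 1 - a*y <> 0 ->
  psi_deriv 0 y = psi_cubic a y / (1 - a*y)^3.
Proof.
  intros Ha Hw. unfold psi_deriv, pf0, pf1, pf2, pf3, psi_cubic. simpl. field. auto.
Qed.

Lemma psi_deriv_S k y : 1 - a*y <> 0 -> is_derive (psi_deriv k) y (psi_deriv (S k) y).
Proof.
  intro Hw.
  assert (Hpow : (1 - a*y)^k <> 0) by (apply pow_nonzero; exact Hw).
  replace (psi_deriv (S k) y) with
    (0 + pf1 * a^k * INR (Factorial.fact k) * INR (S k) * a / (1 - a*y)^(S (S k))
     + pf2 * a^k * INR (Factorial.fact (S k)) * INR (S (S k)) * a / (1 - a*y)^(S (S (S k)))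
     + pf3 * a^k * INR (Factorial.fact (S (S k))) / 2 * INR (S (S (S k))) * a
         / (1 - a*y)^(S (S (S (S k))))).
  2:{ unfold psi_deriv. rewrite !fact_simpl, !mult_INR. simpl pow. field. auto. }
  unfold psi_deriv at 1.
  repeat apply is_derive_Rplus; try (apply inv_power_derive; exact Hw).
  destruct k; [exact (is_derive_const pf0 y)| exact (is_derive_const 0 y)].
Qed.

(** The [m]-th derivative ([m >= 1]) is a positive multiple of the quadratic
    [deriv_quadratic a w m] in [w = 1 - a y], when [a > 0] and [w > 0]. *)
Definition deriv_quadratic (w m : R) : R :=
  6*(12*a^2 - 8*a + 1)*w^2 - 6*(8*a^2 - 7*a + 1)*(m + 1)*w + (6*a^2 - 6*a + 1)*(m + 1)*(m + 2).

Lemma psi_deriv_S_formula n y : a <> 0 -> 1 - a*y <> 0 ->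
  psi_deriv (S n) y = a^(S n) * INR (Factorial.fact (S n)) * deriv_quadratic (1 - a*y) (INR (S n))
                      / (12 * a^3 * (1 - a*y)^(S (S (S (S n))))).
Proof.
  intros Ha Hw. unfold psi_deriv, pf1, pf2, pf3, deriv_quadratic.
  set (m := S n). rewrite !fact_simpl, !mult_INR, !S_INR.
  assert ((1 - a*y)^m <> 0) by (apply pow_nonzero; auto).
  assert (a^m <> 0) by (apply pow_nonzero; auto).
  simpl pow. field. repeat split; auto. apply pow_nonzero; auto.
Qed.

End PartialFractions.

Lemma psi_deriv_0_sign a x : 0 < a -> 0 < 1 - a*x ->
  exists c, 0 < c /\ psi_deriv a 0 x = c * psi_cubic a x.
Proof.
  intros Ha Hw. exists (/ (1 - a*x)^3). split.
  - apply Rinv_0_lt_compat, pow_lt; lra.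
  - rewrite psi_deriv_0 by lra. unfold Rdiv. ring.
Qed.

Lemma psi_deriv_S_sign a n x : 0 < a -> 0 < 1 - a*x ->
  exists c, 0 < c /\ psi_deriv a (S n) x = c * deriv_quadratic a (1 - a*x) (INR (S n)).
Proof.
  intros Ha Hw.
  exists (a^(S n) * INR (Factorial.fact (S n)) / (12 * a^3 * (1 - a*x)^(S (S (S (S n)))))).
  split.
  - apply Rdiv_lt_0_compat.
    + apply Rmult_lt_0_compat; [apply pow_lt; lra| apply INR_fact_lt_0].
    + apply Rmult_lt_0_compat; [apply Rmult_lt_0_compat; [lra| apply pow_lt; lra]|].
      apply pow_lt; lra.
  - rewrite psi_deriv_S_formula by lra. unfold Rdiv. ring.
Qed.

Lemma scaled_nonneg_iff c t : 0 < c -> (0 <= c * t <-> 0 <= t).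
Proof. intro Hc. split; intro H; [|apply Rmult_le_pos; lra]. nra. Qed.

(** * Absolute monotonicity via derivative towers *)

Lemma derivative_towers_agree (f G : nat -> R -> R) x r :
  (forall y, Rabs (y - x) < r -> f O y = G O y) ->
  (forall k y, Rabs (y - x) < r -> derivable_pt_lim (f k) y (f (S k) y)) ->
  (forall k y, Rabs (y - x) < r -> derivable_pt_lim (G k) y (G (S k) y)) ->
  forall k y, Rabs (y - x) < r -> f k y = G k y.
Proof.
  intros H0 Hf HG k. induction k as [|k IH]; intros y Hy; [now apply H0|].
  assert (Hrad : 0 < r - Rabs (y - x)) by lra.
  assert (Hloc : locally y (fun t => f k t = G k t)).
  { exists (mkposreal _ Hrad). intros t Ht. apply IH.
    change (Rabs (t - y) < r - Rabs (y - x)) in Ht.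
    replace (t - x) with ((t - y) + (y - x)) by ring.
    eapply Rle_lt_trans; [apply Rabs_triang|]. lra. }
  assert (Hfd := Hf k y Hy). assert (HGd := HG k y Hy).
  apply is_derive_Reals in Hfd, HGd.
  apply (is_derive_ext_loc _ _ _ _ Hloc) in Hfd.
  rewrite <- (is_derive_unique _ _ _ Hfd). exact (is_derive_unique _ _ _ HGd).
Qed.

Lemma peval_continuous l x : continuity_pt (peval l) x.
Proof.
  induction l as [|c l IH].
  - apply (continuity_pt_const (fun _ => 0)). intros u v; reflexivity.
  - change (continuity_pt (fct_cte c + (id * peval l))%F x).
    apply continuity_pt_plus; [apply continuity_pt_const; intros u v; reflexivity|].
    apply continuity_pt_mult; [apply derivable_continuous_pt, derivable_pt_id| exact IH].
Qed.

Lemma nonzero_near f x : continuity_pt f x -> f x <> 0 ->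
  exists d, 0 < d /\ forall y, Rabs (y - x) < d -> f y <> 0.
Proof.
  intros Hc Hx.
  destruct (Hc (Rabs (f x)) (Rabs_pos_lt _ Hx)) as [d [Hd Hy]].
  exists d. split; auto. intros y Hyx Hfy.
  destruct (Req_dec y x) as [->|Hne]; [contradiction|].
  assert (H := Hy y (conj (conj I (not_eq_sym Hne)) Hyx)).
  simpl in H. unfold R_dist in H. rewrite Hfy, Rminus_0_l, Rabs_Ropp in H. lra.
Qed.

(** If [N/D] is absolutely monotonic at [x] and [G] is a derivative tower of
    [N/D] on a ball around [x], then every [G k x] is nonnegative: the
    representative [p1/q1] in the definition has the same derivatives. *)
Lemma rat_abs_mono_derivs (N D : R -> R) (G : nat -> R -> R) x r : 0 < r ->
  (forall y, Rabs (y - x) < r -> D y <> 0 /\ G O y = N y / D y) ->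
  (forall k y, Rabs (y - x) < r -> derivable_pt_lim (G k) y (G (S k) y)) ->
  rat_abs_mono N D x -> forall k, 0 <= G k x.
Proof.
  intros Hr HG HGd [p1 [q1 [Hpq [Hq [d [Hd [f [Hf0 [Hfd Hfp]]]]]]]]].
  destruct (nonzero_near _ _ (peval_continuous q1 x) Hq) as [d2 [Hd2 Hq2]].
  set (s := Rmin r (Rmin d d2)).
  assert (Hs : 0 < s /\ s <= r /\ s <= d /\ s <= d2).
  { unfold s. pose proof (Rmin_l r (Rmin d d2)). pose proof (Rmin_r r (Rmin d d2)).
    pose proof (Rmin_l d d2). pose proof (Rmin_r d d2).
    repeat split; try lra. repeat apply Rmin_pos; auto. }
  assert (Hagree : forall k y, Rabs (y - x) < s -> f k y = G k y).
  { apply derivative_towers_agree.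
    - intros y Hy. rewrite Hf0 by lra. destruct (HG y ltac:(lra)) as [HD ->].
      assert (Hqy : peval q1 y <> 0) by (apply Hq2; lra).
      replace (peval p1 y / peval q1 y) with (peval p1 y * D y / (peval q1 y * D y))
        by (field; auto).
      rewrite Hpq. field. auto.
    - intros k y Hy. apply Hfd. lra.
    - intros k y Hy. apply HGd. lra. }
  intro k. rewrite <- Hagree; [apply Hfp|]. rewrite Rminus_diag, Rabs_R0. lra.
Qed.

Lemma den_pos_ball a x y : a <> 0 -> 0 < 1 - a*x ->
  Rabs (y - x) < (1 - a*x) / Rabs a -> 0 < 1 - a*y.
Proof.
  intros Ha Hw Hy.
  assert (Hpa : 0 < Rabs a) by (apply Rabs_pos_lt; auto).
  assert (H : Rabs (a*(y - x)) < 1 - a*x).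
  { rewrite Rabs_mult. apply (Rmult_lt_compat_l (Rabs a)) in Hy; auto.
    replace (Rabs a * ((1 - a*x)/Rabs a)) with (1 - a*x) in Hy by (field; lra). lra. }
  apply Rabs_def2 in H. lra.
Qed.

Lemma peval_den3 a y : peval (1 :: (-3*a) :: (3*a^2) :: (-a^3) :: nil) y = den 3 a y.
Proof. unfold den. simpl. ring. Qed.

Lemma psi_abs_mono_iff a x : a <> 0 -> 0 < 1 - a*x ->
  rat_abs_mono (peval (psi_num a)) (den 3 a) x <-> forall k, 0 <= psi_deriv a k x.
Proof.
  intros Ha Hw.
  assert (Hr : 0 < (1 - a*x) / Rabs a) by (apply Rdiv_lt_0_compat; [lra| apply Rabs_pos_lt; auto]).
  assert (Hball := den_pos_ball a x).
  assert (Htower : forall k y, Rabs (y - x) < (1 - a*x) / Rabs a ->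
                     derivable_pt_lim (psi_deriv a k) y (psi_deriv a (S k) y)).
  { intros k y Hy. apply is_derive_Reals, psi_deriv_S. specialize (Hball y Ha Hw Hy). lra. }
  assert (Hbase : forall y, Rabs (y - x) < (1 - a*x) / Rabs a ->
                    den 3 a y <> 0 /\ psi_deriv a O y = peval (psi_num a) y / den 3 a y).
  { intros y Hy. specialize (Hball y Ha Hw Hy). unfold den.
    split; [apply pow_nonzero; lra|].
    rewrite psi_deriv_0, peval_psi_num by lra. reflexivity. }
  split.
  - exact (rat_abs_mono_derivs _ _ _ x _ Hr Hbase Htower).
  - intro Hnonneg. exists (psi_num a), (1 :: (-3*a) :: (3*a^2) :: (-a^3) :: nil).
    split; [intro y; rewrite peval_den3; ring|].
    split; [rewrite peval_den3; unfold den; apply pow_nonzero; lra|].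
    exists ((1 - a*x) / Rabs a). split; [exact Hr|].
    exists (psi_deriv a). split; [|split; [exact Htower| exact Hnonneg]].
    intros y Hy. rewrite peval_den3. exact (proj2 (Hbase y Hy)).
Qed.

(** * The optimal parameter [a_star = (2 - sqrt 2)/4] *)

Definition a_star : R := (2 - sqrt 2) / 4.

Lemma sqrt2_sq : sqrt 2 * sqrt 2 = 2.
Proof. apply sqrt_sqrt; lra. Qed.

Lemma sqrt2_bounds : 1.4142 < sqrt 2 < 1.4143.
Proof. pose proof sqrt2_sq; pose proof (sqrt_lt_R0 2 ltac:(lra)). split; nra. Qed.

Lemma sqrt8_eq : sqrt 8 = 2 * sqrt 2.
Proof.
  pose proof sqrt2_sq; pose proof sqrt2_bounds.
  replace 8 with ((2 * sqrt 2) * (2 * sqrt 2)) by nra. apply sqrt_square. lra.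
Qed.

(** [a_star] maps the endpoint [-(2 + 2 sqrt 2)] to [w = 1 + sqrt 2 / 2]. *)
Lemma a_star_endpoint : a_star * (2 + 2 * sqrt 2) = sqrt 2 / 2.
Proof. unfold a_star. pose proof sqrt2_sq. nra. Qed.

Lemma a_star_quadratic w m :
  deriv_quadratic a_star w m = (9 - 6*sqrt 2) * (w - (1 + sqrt 2/2))^2
    + (3 - sqrt 2*3/2) * (1 - m) * (w - (1 + sqrt 2/2)) + (m - 1)*(m - 2)/4.
Proof.
  pose proof sqrt2_sq as hs. unfold a_star. set (s := sqrt 2) in *.
  assert (E : deriv_quadratic ((2 - s)/4) w m - ((9 - 6*s)*(w - (1 + s/2))^2
                + (3 - s*3/2)*(1 - m)*(w - (1 + s/2)) + (m - 1)*(m - 2)/4)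
    = (s*s - 2) * ((9/2)*w^2 - 3*m*w - 9*w + (3/8)*m^2 + (15/8)*m + 15/4 + (3/2)*s))
    by (unfold deriv_quadratic; field).
  rewrite hs in E. lra.
Qed.

(** For [1 <= w <= 1 + sqrt 2/2] (i.e. [x] in [[-(2 + 2 sqrt 2), 0]]) all terms
    of that expression are nonnegative when [m >= 1]. *)
Lemma a_star_quadratic_nonneg w n : 1 <= w <= 1 + sqrt 2 / 2 ->
  0 <= deriv_quadratic a_star w (INR (S n)).
Proof.
  intros Hw. rewrite a_star_quadratic. pose proof sqrt2_bounds as hb.
  set (s := sqrt 2) in *. rewrite S_INR.
  assert (Hn : 0 <= INR n) by apply pos_INR.
  assert (H1 : 0 <= (INR n + 1 - 1) * (INR n + 1 - 2)).
  { destruct n as [|n]; [simpl; lra|]. rewrite S_INR. pose proof (pos_INR n). nra. }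
  assert (H2 : 0 <= (9 - 6*s) * (w - (1 + s/2))^2)
    by (apply Rmult_le_pos; [lra| apply pow2_ge_0]).
  assert (H3 : 0 <= (3 - s*3/2) * ((1 - (INR n + 1)) * (w - (1 + s/2))))
    by (apply Rmult_le_pos; nra).
  nra.
Qed.

Lemma a_star_cubic_pos x : -(2 + 2*sqrt 2) <= x <= 0 -> 0 < psi_cubic a_star x.
Proof.
  intros Hx. pose proof sqrt2_sq as hs. pose proof sqrt2_bounds as hb.
  unfold a_star. set (s := sqrt 2) in *.
  assert (E : psi_cubic ((2 - s)/4) x
              - (1 + (s*3/4 - 1/2)*x + x^2/8 + (11/48 - s*5/32)*x^3)
     = (s*s - 2) * ((3/16)*x^2 + (3/32)*x^3 + (1/64)*s*x^3)) by (unfold psi_cubic; field).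
  rewrite hs in E.
  replace (psi_cubic ((2 - s)/4) x)
    with (1 + (s*3/4 - 1/2)*x + x^2/8 + (11/48 - s*5/32)*x^3) by lra.
  set (u := -x). replace x with (-u) by (unfold u; ring).
  assert (Hu : 0 <= u <= 4.8286) by (unfold u; lra).
  assert (0 < 1 - 0.560725*u + u^2/8 - 0.0082*u^3).
  { assert (0 <= u^2*(4.8286 - u)) by (apply Rmult_le_pos; nra). nra. }
  assert (u * (s*3/4 - 1/2) <= 0.560725 * u) by nra.
  assert (u^3 * (11/48 - s*5/32) <= 0.0082 * u^3) by (assert (0 <= u^3) by (apply pow_le; lra); nra).
  nra.
Qed.

Lemma a_star_abs_mono x : -(2 + sqrt 8) <= x <= 0 ->
  rat_abs_mono (peval (psi_num a_star)) (den 3 a_star) x.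
Proof.
  rewrite sqrt8_eq. intro Hx. pose proof sqrt2_bounds. pose proof a_star_endpoint.
  assert (Ha : 0 < a_star) by (unfold a_star; lra).
  assert (Hw : 1 <= 1 - a_star*x <= 1 + sqrt 2/2).
  { assert (0 <= a_star * (x + (2 + 2*sqrt 2))) by (apply Rmult_le_pos; lra). nra. }
  apply psi_abs_mono_iff; [lra| lra|]. intros [|n].
  - destruct (psi_deriv_0_sign a_star x) as [c [Hc ->]]; [lra| lra|].
    apply Rmult_le_pos; [lra|]. left. apply a_star_cubic_pos. lra.
  - destruct (psi_deriv_S_sign a_star n x) as [c [Hc ->]]; [lra| lra|].
    apply Rmult_le_pos; [lra|]. apply a_star_quadratic_nonneg. exact Hw.
Qed.

(** Just beyond [-(2 + 2 sqrt 2)] the second derivative of [psi_{a_star}] is negative. *)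
Lemma a_star_not_abs_mono x : -(3 + 2*sqrt 2) <= x < -(2 + 2*sqrt 2) ->
  ~ rat_abs_mono (peval (psi_num a_star)) (den 3 a_star) x.
Proof.
  intros Hx Ham. pose proof sqrt2_bounds. pose proof a_star_endpoint.
  assert (Ha : 0 < a_star) by (unfold a_star; lra).
  set (d := 1 - a_star*x - (1 + sqrt 2/2)).
  assert (Hd : 0 < d <= a_star).
  { assert (0 < a_star * (-(2 + 2*sqrt 2) - x)) by (apply Rmult_lt_0_compat; lra).
    assert (0 <= a_star * (x + (3 + 2*sqrt 2))) by (apply Rmult_le_pos; lra).
    unfold d. nra. }
  assert (Hw : 0 < 1 - a_star*x) by (unfold d in Hd; lra).
  apply (psi_abs_mono_iff a_star x ltac:(lra) Hw) with (k := 2%nat) in Ham.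
  destruct (psi_deriv_S_sign a_star 1 x Ha Hw) as [c [Hc Hder]].
  rewrite Hder, scaled_nonneg_iff, a_star_quadratic in Ham by exact Hc.
  fold d in Ham. simpl INR in Ham.
  assert ((9 - 6*sqrt 2) * d < 3 - sqrt 2*3/2) by (unfold a_star in Hd; nra).
  nra.
Qed.

(** * Every other parameter is worse *)

Definition abs_mono_on (N D : R -> R) (c : R) : Prop :=
  forall x, - c < x <= 0 -> rat_abs_mono N D x.

(** [a < 0]: the fourth derivative at [0] equals [12 a (2a - 1)(a - 1) < 0]. *)
Lemma negative_param_fails a : a < 0 ->
  ~ rat_abs_mono (peval (psi_num a)) (den 3 a) 0.
Proof.
  intros Ha Ham.
  apply (psi_abs_mono_iff a 0 ltac:(lra) ltac:(lra)) with (k := 4%nat) in Ham.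
  rewrite psi_deriv_S_formula in Ham by lra.
  replace (a ^ 4 * INR (Factorial.fact 4) * deriv_quadratic a (1 - a * 0) (INR 4)
             / (12 * a ^ 3 * (1 - a * 0) ^ 7)) with (12*a*(2*a - 1)*(a - 1)) in Ham
    by (unfold deriv_quadratic; simpl; field; lra).
  assert (0 < (2*a - 1)*(a - 1)) by nra.
  nra.
Qed.

(** [a = 0]: [psi_0] is the Taylor cubic of [exp], whose second derivative
    [1 + y] is negative at [-2]. *)
Definition taylor3_deriv (k : nat) (y : R) : R :=
  match k with
  | O => 1 + y + y^2/2 + y^3/6
  | 1%nat => 1 + y + y^2/2
  | 2%nat => 1 + y
  | 3%nat => 1
  | _ => 0
  end.

Lemma taylor3_deriv_S k y : derivable_pt_lim (taylor3_deriv k) y (taylor3_deriv (S k) y).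
Proof.
  apply is_derive_Reals.
  destruct k as [|[|[|[|k]]]]; unfold taylor3_deriv.
  - auto_derive; [exact I| simpl; lra].
  - auto_derive; [exact I| simpl; lra].
  - auto_derive; [exact I| simpl; lra].
  - exact (is_derive_const 1 y).
  - exact (is_derive_const 0 y).
Qed.

Lemma zero_param_fails : ~ rat_abs_mono (peval (psi_num 0)) (den 3 0) (-2).
Proof.
  intro Ham.
  assert (Hbase : forall y, Rabs (y - -2) < 1 ->
            den 3 0 y <> 0 /\ taylor3_deriv O y = peval (psi_num 0) y / den 3 0 y).
  { intros y _. unfold den. rewrite peval_psi_num. unfold psi_cubic.
    split; [simpl; lra| simpl; field]. }
  pose proof (rat_abs_mono_derivs _ _ taylor3_deriv (-2) 1 ltac:(lra) Hbase
                (fun k y _ => taylor3_deriv_S k y) Ham 2%nat) as H.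
  simpl in H. lra.
Qed.

Lemma nonneg_left_endpoint f c : 0 < c -> (forall x, -c < x <= 0 -> 0 <= f x) ->
  continuity_pt f (-c) -> 0 <= f (-c).
Proof.
  intros Hc Hf Hcont.
  destruct (Rle_or_lt 0 (f (-c))) as [|Hneg]; auto. exfalso.
  destruct (Hcont (- f (-c)) ltac:(lra)) as [d [Hd Hy]].
  set (y := -c + Rmin d c / 2).
  assert (Hm : 0 < Rmin d c) by (apply Rmin_pos; auto).
  pose proof (Rmin_l d c). pose proof (Rmin_r d c).
  assert (Hyy : D_x no_cond (-c) y /\ R_dist y (-c) < d).
  { split; [split; [exact I| unfold y; lra]|].
    unfold R_dist, y. replace (-c + Rmin d c / 2 - -c) with (Rmin d c / 2) by ring.
    rewrite Rabs_right; lra. }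
  specialize (Hy y Hyy). simpl in Hy. unfold R_dist in Hy.
  assert (0 <= f y) by (apply Hf; unfold y; lra).
  apply Rabs_def2 in Hy. lra.
Qed.

Lemma endpoint_quadratic_nonneg a n : 0 < a ->
  abs_mono_on (peval (psi_num a)) (den 3 a) (2 + 2*sqrt 2) ->
  0 <= deriv_quadratic a (1 + a*(2 + 2*sqrt 2)) (INR (S n)).
Proof.
  intros Ha Hon. pose proof sqrt2_bounds.
  assert (Hwe : 0 < 1 - a * (-(2 + 2*sqrt 2))) by nra.
  assert (Hend : 0 <= psi_deriv a (S n) (-(2 + 2*sqrt 2))).
  { apply nonneg_left_endpoint; [lra| |].
    - intros x Hx. apply (psi_abs_mono_iff a x); [lra| nra| apply Hon; exact Hx].
    - apply derivable_continuous_pt. exists (psi_deriv a (S (S n)) (-(2 + 2*sqrt 2))).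
      apply is_derive_Reals, psi_deriv_S. lra. }
  destruct (psi_deriv_S_sign a n _ Ha Hwe) as [c [Hc Hder]].
  rewrite Hder, scaled_nonneg_iff in Hend by exact Hc.
  replace (1 + a*(2 + 2*sqrt 2)) with (1 - a * (-(2 + 2*sqrt 2))) by ring. exact Hend.
Qed.

(** [0 < a < a_star]: the second derivative fails at the endpoint, since
    there the quadratic equals [a (a - a_star) q(a)] with [q > 0]. *)
Lemma small_param_fails a : 0 < a < a_star ->
  ~ abs_mono_on (peval (psi_num a)) (den 3 a) (2 + 2*sqrt 2).
Proof.
  intros Ha Hon. pose proof sqrt2_sq as hs. pose proof sqrt2_bounds.
  pose proof (endpoint_quadratic_nonneg a 1 ltac:(lra) Hon) as Hend.
  replace (INR 2) with 2 in Hend by (simpl; lra).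
  unfold a_star in Ha. set (s := sqrt 2) in *.
  assert (E : deriv_quadratic a (1 + a*(2 + 2*s)) 2
              - a*(a - (2 - s)/4)*((72 + 60*s) - (432 + 312*s)*a + (864 + 576*s)*a^2)
    = (s*s - 2)*(288*a^4 - 336*a^3 + 102*a^2 - 15*a)) by (unfold deriv_quadratic; field).
  rewrite hs in E.
  assert (Hq : 0 < (72 + 60*s) - (432 + 312*s)*a + (864 + 576*s)*a^2).
  { assert ((432 + 312*s)*a <= 873.27*a) by nra.
    assert (1678.57*a^2 <= (864 + 576*s)*a^2) by (assert (0 <= a^2) by nra; nra).
    nra. }
  assert (a*(a - (2 - s)/4) < 0) by nra. nra.
Qed.

(** [a_star < a <= 0.38]: the first derivative fails at the endpoint, since
    there the quadratic equals [a^2 (a - a_star) l(a)] with [l < 0]. *)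
Lemma middle_param_fails a : a_star < a <= 0.38 ->
  ~ abs_mono_on (peval (psi_num a)) (den 3 a) (2 + 2*sqrt 2).
Proof.
  intros Ha Hon. pose proof sqrt2_sq as hs. pose proof sqrt2_bounds.
  assert (Hpos : 0 < a) by (unfold a_star in Ha; lra).
  pose proof (endpoint_quadratic_nonneg a 0 Hpos Hon) as Hend.
  replace (INR 1) with 1 in Hend by (simpl; lra).
  unfold a_star in Ha. set (s := sqrt 2) in *.
  assert (E : deriv_quadratic a (1 + a*(2 + 2*s)) 1
              - a^2*(a - (2 - s)/4)*((-336 - 216*s) + (864 + 576*s)*a)
    = (s*s - 2)*(288*a^4 - 336*a^3 + 78*a^2)) by (unfold deriv_quadratic; field).
  rewrite hs in E.
  assert ((-336 - 216*s) + (864 + 576*s)*a < 0) by nra.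
  assert (0 < a^2) by nra.
  assert (a^2*(a - (2 - s)/4) > 0) by nra. nra.
Qed.

(** [0.38 < a <= 1.85]: [psi_a] itself is negative at [-24/5]. *)
Lemma large_param_fails a : 0.38 < a <= 1.85 ->
  ~ rat_abs_mono (peval (psi_num a)) (den 3 a) (-24/5).
Proof.
  intros Ha Ham.
  apply (psi_abs_mono_iff a (-24/5) ltac:(lra) ltac:(lra)) with (k := 0%nat) in Ham.
  destruct (psi_deriv_0_sign a (-24/5)) as [c [Hc Hder]]; [lra| lra|].
  rewrite Hder, scaled_nonneg_iff in Ham by exact Hc.
  assert (0 <= (a - 0.38)*(1.85 - a)) by nra.
  assert (0 <= (a - 0.38)*(1.85 - a)*a) by nra.
  unfold psi_cubic in Ham. nra.
Qed.

(** [a > 1.85]: the third derivative is negative at [-1/(6a)], where [w = 7/6]. *)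
Lemma huge_param_fails a : 1.85 < a ->
  ~ rat_abs_mono (peval (psi_num a)) (den 3 a) (-1/(6*a)).
Proof.
  intros Ha Ham.
  assert (Hw : 1 - a * (-1/(6*a)) = 7/6) by (field; lra).
  assert (Hwpos : 0 < 1 - a * (-1/(6*a))) by (rewrite Hw; lra).
  apply (psi_abs_mono_iff a _ ltac:(lra) Hwpos) with (k := 3%nat) in Ham.
  destruct (psi_deriv_S_sign a 2 _ ltac:(lra) Hwpos) as [c [Hc Hder]].
  rewrite Hder, scaled_nonneg_iff, Hw in Ham by exact Hc.
  unfold deriv_quadratic in Ham. simpl INR in Ham. nra.
Qed.

Lemma other_param_fails a : a <> a_star ->
  ~ abs_mono_on (peval (psi_num a)) (den 3 a) (2 + sqrt 8).
Proof.
  intros Hne Hon. rewrite sqrt8_eq in Hon. pose proof sqrt2_bounds.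
  assert (Hpt : forall x, -(2 + 2*sqrt 2) < x <= 0 -> rat_abs_mono (peval (psi_num a)) (den 3 a) x)
    by exact Hon.
  destruct (Rtotal_order a 0) as [Hneg|[->|Hpos]].
  - exact (negative_param_fails a Hneg (Hpt 0 ltac:(lra))).
  - exact (zero_param_fails (Hpt (-2) ltac:(lra))).
  - destruct (Rtotal_order a a_star) as [Hlt|[Heq|Hgt]]; [| contradiction|].
    + exact (small_param_fails a (conj Hpos Hlt) Hon).
    + destruct (Rle_or_lt a 0.38) as [H1|H1];
        [exact (middle_param_fails a (conj Hgt H1) Hon)|].
      destruct (Rle_or_lt a 1.85) as [H2|H2];
        [exact (large_param_fails a (conj H1 H2) (Hpt (-24/5) ltac:(lra)))|].
      apply (huge_param_fails a H2), Hpt.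
      assert (0 < 1/(6*a) < 1) by (split; [apply Rdiv_lt_0_compat|
        apply (Rmult_lt_reg_r (6*a)); [| field_simplify]]; lra).
      unfold Rdiv in *. lra.
Qed.

(** * Radii of absolute monotonicity *)

Lemma radius_exact N D c e : 0 <= c -> 0 < e ->
  (forall x, - c <= x <= 0 -> rat_abs_mono N D x) ->
  (forall x, - (c + e) <= x < - c -> ~ rat_abs_mono N D x) ->
  is_lub (AM_radius_set N D) c.
Proof.
  intros Hc He Hin Hout. split.
  - intros r [[Hr Hall] | ->]; [|exact Hc].
    destruct (Rle_or_lt r c) as [|Hlt]; auto. exfalso.
    set (x := - Rmin r (c + e)).
    pose proof (Rmin_l r (c + e)). pose proof (Rmin_r r (c + e)).
    assert (c < Rmin r (c + e)) by (apply Rmin_glb_lt; lra).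
    apply (Hout x); [unfold x; lra|]. apply Hall. unfold x; lra.
  - intros b Hb. apply Hb. left. split; [exact Hc| exact Hin].
Qed.

Lemma radius_lt N D c : ~ abs_mono_on N D c ->
  exists m, is_lub (AM_radius_set N D) m /\ m < c.
Proof.
  intro Hnot. apply not_all_ex_not in Hnot. destruct Hnot as [x0 Hx0].
  apply imply_to_and in Hx0. destruct Hx0 as [Hx0 Hbad].
  assert (Hb : forall r, AM_radius_set N D r -> r <= - x0).
  { intros r [[Hr Hall] | ->]; [|lra].
    destruct (Rle_or_lt r (- x0)) as [|Hlt]; auto. exfalso. apply Hbad, Hall. lra. }
  destruct (completeness (AM_radius_set N D)) as [m Hm].
  - exists (- x0). exact Hb.
  - exists 0. right. reflexivity.
  - exists m. split; [exact Hm|]. destruct Hm as [_ Hm]. specialize (Hm (- x0) Hb). lra.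
Qed.

Lemma a_star_radius : is_lub (AM_radius_set (peval (psi_num a_star)) (den 3 a_star)) (2 + sqrt 8).
Proof.
  pose proof sqrt2_bounds. pose proof sqrt8_eq.
  apply (radius_exact _ _ _ 1); [lra| lra| exact a_star_abs_mono|].
  intros x Hx. apply a_star_not_abs_mono. lra.
Qed.

Lemma other_radius a : a <> a_star ->
  exists m, is_lub (AM_radius_set (peval (psi_num a)) (den 3 a)) m /\ m < 2 + sqrt 8.
Proof. intro Hne. apply radius_lt, other_param_fails, Hne. Qed.

Lemma psi_radius_le a r : AM_radius_set (peval (psi_num a)) (den 3 a) r -> r <= 2 + sqrt 8.
Proof.
  intro Hr. destruct (Req_dec a a_star) as [->|Hne].
  - exact (proj1 a_star_radius r Hr).
  - destruct (other_radius a Hne) as [m [[Hm _] Hlt]]. specialize (Hm r Hr). lra.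
Qed.

Theorem mainTheorem18 :
  (* every element of \hat\Pi_{3/3,3} equals some psi_b as a rational function *)
  (forall (P : list R) (a : R), PiHat 3 3 P a ->
     exists b : R, forall z : R,
       peval P z * den 3 b z = peval (psi_num b) z * den 3 a z) /\
  (* \hat R_{3/3,3} = sup over the class of R(psi) = 2 + sqrt 8 *)
  is_lub (fun r => exists (P : list R) (a : R),
                     PiHat 3 3 P a /\ AM_radius_set (peval P) (den 3 a) r)
         (2 + sqrt 8) /\
  (* attained at a = (2 - sqrt 2)/4 *)
  is_lub (AM_radius_set (peval (psi_num ((2 - sqrt 2) / 4)))
                        (den 3 ((2 - sqrt 2) / 4)))
         (2 + sqrt 8) /\
  (* R(psi_a) < 2 + sqrt 8 for every other a *)
  (forall a : R, a <> (2 - sqrt 2) / 4 ->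
     exists m : R, is_lub (AM_radius_set (peval (psi_num a)) (den 3 a)) m /\
                   m < 2 + sqrt 8).
Proof.
  assert (Hnum : forall P a, PiHat 3 3 P a -> peval P = peval (psi_num a)).
  { intros P a HP. apply functional_extensionality. intro y.
    rewrite (PiHat_numerator P a HP), peval_psi_num. reflexivity. }
  split; [|split; [|split; [exact a_star_radius| exact other_radius]]].
  - intros P a HP. exists a. intro z. rewrite (Hnum P a HP). reflexivity.
  - split.
    + intros r [P [a [HP Hr]]]. rewrite (Hnum P a HP) in Hr. exact (psi_radius_le a r Hr).
    + intros b Hb. apply Hb. exists (psi_num a_star), a_star.
      split; [apply psi_in_PiHat|].
      left. split; [pose proof sqrt2_bounds; rewrite sqrt8_eq; lra| exact a_star_abs_mono].
Qed.
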